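(* Let $\mathbf c:[-l/2,l/2]\to\mathbb R^3$ ($l>0$) be an embedded arc parametrized by arc-length with nowhere vanishing curvature, and let $C$ be its image. Then $C$ admits a positive symmetry and a negative symmetry at the same time if and only if $C$ lies in a plane and $C$ has a non-trivial symmetry.
   Context: A symmetry of $C$ is an isometry $T\ne\mathrm{id}$ of $\mathbb R^3$ with $T(C)=C$; it is non-trivial if $T(\mathbf x)\ne\mathbf x$ for some $\mathbf x\in C$, and positive (resp. negative) if $T$ preserves (resp. reverses) the orientation of $\mathbb R^3$. *)

From HB Require Import structures.
From mathcomp Require Import all_boot all_order all_algebra.
From mathcomp Require Import all_classical all_reals all_analysis.
Set Implicit Arguments. Unset Strict Implicit. Unset Printing Implicit Defensive.
Import Order.TTheory GRing.Theory Num.Theory.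
Import numFieldNormedType.Exports.
Local Open Scope classical_set_scope.
Local Open Scope ring_scope.

Section Defs.
Variable R : realType.
Local Notation V := 'rV[R]_3.

Definition dotp (x y : V) : R := \sum_(i < 3) x 0 i * y 0 i.
Definition sqdist (x y : V) : R := dotp (x - y) (x - y).

Definition isometry (T : V -> V) : Prop := forall x y, sqdist (T x) (T y) = sqdist x y.

Definition symmetry_of (C : set V) (T : V -> V) : Prop :=
  [/\ isometry T, T <> id & T @` C = C].

Definition nontrivial_on (C : set V) (T : V -> V) : Prop := exists2 x, C x & T x <> x.

Definition orientation_preserving (T : V -> V) : Prop :=
  exists (A : 'M[R]_3) (b : V), 0 < \det A /\ forall x, T x = x *m A + b.
Definition orientation_reversing (T : V -> V) : Prop :=
  exists (A : 'M[R]_3) (b : V), \det A < 0 /\ forall x, T x = x *m A + b.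

Definition planar (C : set V) : Prop :=
  exists (n : V) (d : R), n != 0 /\ forall x, C x -> dotp n x = d.

(* c is (twice differentiable and) parametrized by arc length on [a,b],
   with nowhere vanishing curvature |c''| *)
Definition unit_speed_nonzero_curvature (c : R -> V) (a b : R) : Prop :=
  forall s, a <= s <= b ->
    [/\ derivable c s 1, dotp (derive1 c s) (derive1 c s) = 1,
        derivable (derive1 c) s 1 & derive1 (derive1 c) s != 0].

(* embedded arc: injective on [a,b] (continuity follows from differentiability) *)
Definition embedded_on (c : R -> V) (a b : R) : Prop :=
  forall s t, a <= s <= b -> a <= t <= b -> c s = c t -> s = t.

End Defs.

(* An isometry T with T(C) = C induces a bijection phi of the parameter
   interval with c (phi s) = T (c s); phi is continuous (C is a compact embedded
   arc), hence monotone, and since T preserves chords while c has unit speed,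
   |phi'| = 1.  So T either fixes C pointwise or reverses it (s |-> -s).
   A positive symmetry cannot fix C pointwise: its orthogonal linear part would
   fix the independent vectors c'(0) and c''(0) and, having positive
   determinant, be the identity.  Hence a positive symmetry P reverses C, and a
   negative symmetry N either fixes C or agrees with P on C; either way C lies
   where two affine maps with different linear parts agree, which is inside a
   plane.  Conversely, the reflection in the plane of C is a negative symmetry
   fixing C, and composing it with a negative non-trivial symmetry gives a
   positive one. *)

From Pilot Require Import Defs.
From HB Require Import structures.
From mathcomp Require Import all_boot all_order all_algebra.
From mathcomp Require Import all_classical all_reals all_analysis.
From mathcomp Require Import ring lra.
Set Implicit Arguments. Unset Strict Implicit. Unset Printing Implicit Defensive.
Import Order.TTheory GRing.Theory Num.Theory.
Import numFieldNormedType.Exports.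
Local Open Scope classical_set_scope.
Local Open Scope ring_scope.

(** * Euclidean geometry of R^3 *)

Definition i0 : 'I_3 := @Ordinal 3 0 isT.
Definition i1 : 'I_3 := @Ordinal 3 1 isT.
Definition i2 : 'I_3 := @Ordinal 3 2 isT.

Lemma ord3_ind (P : 'I_3 -> Prop) : P i0 -> P i1 -> P i2 -> forall i, P i.
Proof.
move=> P0 P1 P2 [[|[|[|n]]] lt_n3] //.
- by have -> : Ordinal lt_n3 = i0 by apply: val_inj.
- by have -> : Ordinal lt_n3 = i1 by apply: val_inj.
- by have -> : Ordinal lt_n3 = i2 by apply: val_inj.
Qed.

Section Euclidean.
Variable R : realType.
Local Notation V := 'rV[R]_3.

Lemma sum_ord3 (F : 'I_3 -> R) : \sum_(i < 3) F i = F i0 + F i1 + F i2.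
Proof.
rewrite !big_ord_recr big_ord0 /= add0r.
by congr (F _ + F _ + F _); apply: val_inj.
Qed.

Lemma rV3_eq (x y : V) :
  x 0 i0 = y 0 i0 -> x 0 i1 = y 0 i1 -> x 0 i2 = y 0 i2 -> x = y.
Proof. by move=> e0 e1 e2; apply/rowP; apply: ord3_ind. Qed.

Lemma dotpE (x y : V) :
  dotp x y = x 0 i0 * y 0 i0 + x 0 i1 * y 0 i1 + x 0 i2 * y 0 i2.
Proof. by rewrite /dotp sum_ord3. Qed.

Lemma mulmx3E (x : V) (A : 'M[R]_3) j :
  (x *m A) 0 j = x 0 i0 * A i0 j + x 0 i1 * A i1 j + x 0 i2 * A i2 j.
Proof. by rewrite mxE sum_ord3. Qed.

Lemma det3E (M : 'M[R]_3) : \det M =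
    M i0 i0 * (M i1 i1 * M i2 i2 - M i1 i2 * M i2 i1)
  - M i0 i1 * (M i1 i0 * M i2 i2 - M i1 i2 * M i2 i0)
  + M i0 i2 * (M i1 i0 * M i2 i1 - M i1 i1 * M i2 i0).
Proof.
have -> : M = \matrix_(i < 3, j < 3) M (inord i) (inord j).
  by apply/matrixP => i j; rewrite mxE !inord_val.
rewrite (expand_det_row _ ord0) !big_ord_recl big_ord0 /cofactor.
rewrite !(expand_det_row _ ord0) !big_ord_recl !big_ord0 /cofactor.
rewrite !det_mx11 !mxE /= !expr0 !expr1 !expr2 /=.
ring.
Qed.

Lemma dotpC (x y : V) : dotp x y = dotp y x.
Proof. by rewrite !dotpE; ring. Qed.

Lemma dotpDl (x y z : V) : dotp (y + z) x = dotp y x + dotp z x.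
Proof. by rewrite !dotpE !mxE; ring. Qed.

Lemma dotpDr (x y z : V) : dotp x (y + z) = dotp x y + dotp x z.
Proof. by rewrite !dotpE !mxE; ring. Qed.

Lemma dotpBl (x y z : V) : dotp (y - z) x = dotp y x - dotp z x.
Proof. by rewrite !dotpE !mxE; ring. Qed.

Lemma dotpBr (x y z : V) : dotp x (y - z) = dotp x y - dotp x z.
Proof. by rewrite !dotpE !mxE; ring. Qed.

Lemma dotpZl (x y : V) k : dotp (k *: y) x = k * dotp y x.
Proof. by rewrite !dotpE !mxE; ring. Qed.

Lemma dotpZr (x y : V) k : dotp x (k *: y) = k * dotp x y.
Proof. by rewrite !dotpE !mxE; ring. Qed.

Lemma dotp_polar (x y : V) :
  dotp x y = (dotp x x + dotp y y - dotp (x - y) (x - y)) / 2.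
Proof. by rewrite !dotpE !mxE; field. Qed.

Lemma dotpp_eq0 (x : V) : dotp x x = 0 -> x = 0.
Proof. by rewrite dotpE => x0; apply: rV3_eq; rewrite mxE; nra. Qed.

Lemma dotpp_neq0 (x : V) : (dotp x x != 0) = (x != 0).
Proof.
apply/idP/idP; apply: contra_neq; first by move=> ->; rewrite dotpE !mxE !mulr0 !addr0.
exact: dotpp_eq0.
Qed.

Lemma sqdistxx (x : V) : sqdist x x = 0.
Proof. by rewrite /sqdist subrr dotpE !mxE !mulr0 !addr0. Qed.

Lemma sqdist_eq0 (x y : V) : sqdist x y = 0 -> x = y.
Proof. by move/dotpp_eq0/eqP; rewrite subr_eq0 => /eqP. Qed.

Lemma dotp_trmx (x y : V) : dotp x y = (x *m y^T) 0 0.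
Proof. by rewrite /dotp mxE; apply: eq_bigr => i _; rewrite mxE. Qed.

Lemma dotp_orthogonal (A : 'M[R]_3) (x y : V) : A *m A^T = 1%:M ->
  dotp (x *m A) (y *m A) = dotp x y.
Proof. by move=> oA; rewrite !dotp_trmx trmx_mul mulmxA -(mulmxA x) oA mulmx1. Qed.

Lemma mulmx_rowP (A B : 'M[R]_3) : (forall x : V, x *m A = x *m B) -> A = B.
Proof. by move=> eqAB; apply/row_matrixP => i; rewrite !rowE. Qed.

Lemma isometry_affine (T : V -> V) : Defs.isometry T ->
  exists (A : 'M[R]_3) (b : V), (forall x, T x = x *m A + b) /\ A *m A^T = 1%:M.
Proof.
move=> isoT.
have [U UE] : {U : V -> V | forall x, U x = T x - T 0} by exists (fun x => T x - T 0).
have dotpU x y : dotp (U x) (U y) = dotp x y.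
  have := isoT x y; have := isoT x 0; have := isoT y 0.
  rewrite /sqdist !subr0 => Ty Tx Txy.
  rewrite dotp_polar (dotp_polar x y).
  have -> : U x - U y = T x - T y by rewrite !UE opprB addrA subrK.
  by rewrite Txy !UE Tx Ty.
pose e i : V := delta_mx 0 i.
have dotpe x i : dotp x (e i) = x 0 i.
  by rewrite dotpE !mxE; move: i; apply: ord3_ind => /=; ring.
pose A := \matrix_(i < 3, j < 3) U (e i) 0 j.
have mulxA x : x *m A = x 0 i0 *: U (e i0) + x 0 i1 *: U (e i1) + x 0 i2 *: U (e i2).
  by apply: rV3_eq; rewrite !mulmx3E !mxE.
have UA x : U x = x *m A.
  apply/eqP; rewrite -subr_eq0; apply/eqP/dotpp_eq0.
  rewrite mulxA !(dotpBl, dotpBr, dotpDl, dotpDr, dotpZl, dotpZr) !dotpU !dotpe.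
  by rewrite ![dotp (e _) x]dotpC !dotpe !mxE /= dotpE; ring.
exists A, (T 0); split; first by move=> x; rewrite -UA UE subrK.
apply/matrixP => i j.
have -> : (A *m A^T) i j = dotp (U (e i)) (U (e j)).
  by rewrite dotp_trmx !mxE; apply: eq_bigr => k _; rewrite !mxE.
by rewrite dotpU dotpe !mxE eq_sym.
Qed.

Lemma affine_inj (A1 A2 : 'M[R]_3) (b1 b2 : V) :
  (forall x, x *m A1 + b1 = x *m A2 + b2) -> A1 = A2 /\ b1 = b2.
Proof.
move=> eq12; have b12 : b1 = b2 by have := eq12 0; rewrite !mul0mx !add0r.
by split=> //; apply: mulmx_rowP => x; apply: (@addIr _ b1); rewrite {2}b12.
Qed.

Lemma isometry_affine_orthogonal (T : V -> V) (A : 'M[R]_3) (b : V) :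
  Defs.isometry T -> (forall x, T x = x *m A + b) -> A *m A^T = 1%:M.
Proof.
move=> /isometry_affine [A' [b' [TE' oA']]] TE.
by have [-> _] := @affine_inj A A' b b' (fun x => etrans (esym (TE x)) (TE' x)).
Qed.

Lemma planar_affine_agree (C : set V) (A1 A2 : 'M[R]_3) (b1 b2 : V) : A1 != A2 ->
  (forall x, C x -> x *m A1 + b1 = x *m A2 + b2) -> planar C.
Proof.
move=> /eqP neqA eqC.
have [i [j neq_ij]] : exists i j, A1 i j != A2 i j.
  apply/not_existsP => eqA; apply/neqA/matrixP => i j.
  by apply/eqP/negP => neq; apply: (eqA i); exists j; apply/negP.
exists (\row_k (A1 k j - A2 k j)), ((b2 - b1) 0 j); split.
  apply/eqP => /(congr1 (fun m : V => m 0 i)) /eqP.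
  by rewrite !mxE subr_eq0 (negbTE neq_ij).
move=> x /eqC /(congr1 (fun m : V => m 0 j)).
by rewrite !(mulmx3E, mxE) dotpE !mxE => ?; lra.
Qed.

Lemma orientation_reversing_neq_id (T : V -> V) : orientation_reversing T -> T <> id.
Proof.
move=> [A [b [detA TE]]] Tid.
have [A1 _] : A = 1%:M /\ b = 0 by apply: affine_inj => x; rewrite -TE Tid mulmx1 addr0.
by move: detA; rewrite A1 det1 ltr10.
Qed.

Lemma isometry_orientation (T : V -> V) : Defs.isometry T ->
  orientation_preserving T \/ orientation_reversing T.
Proof.
move=> /isometry_affine [A [b [TE oA]]].
have detA2 : \det A * \det A = 1.
  by rewrite -{2}det_tr -det_mulmx oA det1.
have [detA_gt0|detA_le0] := ltrP 0 (\det A).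
  by left; exists A, b.
right; exists A, b; split => //; rewrite lt_neqAle detA_le0 andbT.
by apply/eqP => detA0; move: detA2; rewrite detA0 mul0r => /eqP; rewrite eq_sym oner_eq0.
Qed.

Lemma orientation_reversing_comp (T S : V -> V) :
  orientation_reversing T -> orientation_reversing S -> orientation_preserving (T \o S).
Proof.
move=> [A [b [detA TE]]] [B [d [detB SE]]]; exists (B *m A), (d *m A + b); split.
  by rewrite det_mulmx -mulrNN mulr_gt0 // oppr_gt0.
by move=> x; rewrite /= SE TE mulmxDl mulmxA addrA.
Qed.

Lemma symmetry_comp_fixing (C : set V) (T S : V -> V) :
  symmetry_of C T -> nontrivial_on C T -> Defs.isometry S -> (forall x, C x -> S x = x) ->
  symmetry_of C (T \o S).
Proof.
move=> [isoT _ TC] [x Cx Tx] isoS fixS; split.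
- by move=> y z; rewrite /= isoT isoS.
- by move=> /(congr1 (fun f => f x)); rewrite /= fixS.
- by rewrite -[RHS]TC; apply: eq_imagel => y Cy; rewrite /= fixS.
Qed.

Definition reflection (n : V) : 'M[R]_3 := 1%:M - (2 / dotp n n) *: (n^T *m n).

Lemma reflection_coef (n : V) i j :
  reflection n i j = (i == j)%:R - 2 / dotp n n * (n 0 i * n 0 j).
Proof. by rewrite !mxE big_ord1 !mxE. Qed.

Lemma reflectionE (n x : V) : x *m reflection n = x - (2 / dotp n n * dotp x n) *: n.
Proof.
(* [t] keeps the normalising factor out of reach of [dotpE] *)
apply: rV3_eq; rewrite !mulmx3E !reflection_coef; set t := 2 / dotp n n;
  by rewrite dotpE !mxE /=; ring.
Qed.

Lemma reflection_fix (n x : V) : dotp x n = 0 -> x *m reflection n = x.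
Proof. by move=> xn; rewrite reflectionE xn mulr0 scale0r subr0. Qed.

Lemma reflection_normal (n : V) : n != 0 -> n *m reflection n = - n.
Proof.
rewrite -dotpp_neq0 => nn0; rewrite reflectionE divfK //.
by apply: rV3_eq; rewrite !mxE; ring.
Qed.

Lemma dotpp_reflection (n x : V) : n != 0 ->
  dotp (x *m reflection n) (x *m reflection n) = dotp x x.
Proof.
rewrite -dotpp_neq0 => nn0.
rewrite reflectionE !(dotpBl, dotpBr, dotpZl, dotpZr) (dotpC n x).
by field.
Qed.

Lemma det_reflection (n : V) : n != 0 -> \det (reflection n) = -1.
Proof.
rewrite -dotpp_neq0 => nn0.
have -> : \det (reflection n) = 1 - 2 / dotp n n * dotp n n.
  by rewrite det3E !reflection_coef /=; set t := 2 / dotp n n; rewrite dotpE; ring.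
by rewrite divfK //; lra.
Qed.

Lemma planar_reflection (C : set V) : planar C ->
  exists S : V -> V,
    [/\ Defs.isometry S, orientation_reversing S & forall x, C x -> S x = x].
Proof.
move=> [n [d [n0 Cn]]].
pose b := (2 / dotp n n * d) *: n.
exists (fun x => x *m reflection n + b); split.
- move=> x y; rewrite /sqdist opprD addrACA subrr addr0 -mulmxBl.
  exact: dotpp_reflection.
- by exists (reflection n), b; rewrite det_reflection //; split => //; lra.
- by move=> x Cx; rewrite reflectionE (dotpC x n) (Cn x Cx) subrK.
Qed.

Definition cross (u v : V) : V := \row_(k < 3)
  (if k == i0 then u 0 i1 * v 0 i2 - u 0 i2 * v 0 i1
   else if k == i1 then u 0 i2 * v 0 i0 - u 0 i0 * v 0 i2
   else u 0 i0 * v 0 i1 - u 0 i1 * v 0 i0).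

Lemma crossE (u v : V) :
  [/\ cross u v 0 i0 = u 0 i1 * v 0 i2 - u 0 i2 * v 0 i1,
      cross u v 0 i1 = u 0 i2 * v 0 i0 - u 0 i0 * v 0 i2 &
      cross u v 0 i2 = u 0 i0 * v 0 i1 - u 0 i1 * v 0 i0].
Proof. by rewrite !mxE. Qed.

Lemma dotp_crossl (u v : V) : dotp (cross u v) u = 0.
Proof. by have [E0 E1 E2] := crossE u v; rewrite dotpE E0 E1 E2; ring. Qed.

Lemma dotp_crossr (u v : V) : dotp (cross u v) v = 0.
Proof. by have [E0 E1 E2] := crossE u v; rewrite dotpE E0 E1 E2; ring. Qed.

Lemma dotpp_cross (u v : V) :
  dotp (cross u v) (cross u v) = dotp u u * dotp v v - dotp u v ^+ 2.
Proof. by have [E0 E1 E2] := crossE u v; rewrite !dotpE E0 E1 E2; ring. Qed.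

Lemma cross_frame_decomp (u v x : V) :
  dotp (cross u v) (cross u v) *: x =
      (dotp x u * dotp v v - dotp x v * dotp u v) *: u
    + (dotp x v * dotp u u - dotp x u * dotp u v) *: v
    + dotp x (cross u v) *: cross u v.
Proof.
by have [E0 E1 E2] := crossE u v; apply: rV3_eq; rewrite !mxE !dotpE E0 E1 E2 /=; ring.
Qed.

Lemma mulmx_frame_ext (A B : 'M[R]_3) (u v : V) :
  dotp (cross u v) (cross u v) != 0 ->
  u *m A = u *m B -> v *m A = v *m B -> cross u v *m A = cross u v *m B ->
  A = B.
Proof.
move=> w0 eqAu eqAv eqAw; apply: mulmx_rowP => x; apply: (scalerI w0).
by rewrite !scalemxAl cross_frame_decomp !mulmxDl -!scalemxAl eqAu eqAv eqAw.
Qed.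

Lemma orthogonal_fix2 (A : 'M[R]_3) (u v : V) : A *m A^T = 1%:M ->
  dotp (cross u v) (cross u v) != 0 -> u *m A = u -> v *m A = v ->
  A = 1%:M \/ A = reflection (cross u v).
Proof.
move=> oA w0 Au Av; set w := cross u v in w0 *.
have w_n0 : w != 0 by rewrite -dotpp_neq0.
set N := dotp w w in w0.
have wA_perp : dotp (w *m A) u = 0 /\ dotp (w *m A) v = 0.
  by rewrite -{1}Au -{1}Av !dotp_orthogonal // dotp_crossl dotp_crossr.
have wA_norm : dotp (w *m A) (w *m A) = N by rewrite dotp_orthogonal.
set k := dotp (w *m A) w.
have wAE : N *: (w *m A) = k *: w.
  by rewrite cross_frame_decomp wA_perp.1 wA_perp.2 !mul0r !subrr !scale0r !add0r.
have k2 : k ^+ 2 = N ^+ 2.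
  have := congr1 (fun y => dotp y y) wAE.
  rewrite /= !dotpZl !dotpZr wA_norm -/N => E.
  by apply: (mulIf w0); rewrite !expr2 -!mulrA -E.
move/eqP: k2; rewrite eqf_sqr => /orP[] /eqP kE.
- left; apply: (mulmx_frame_ext w0); rewrite ?mulmx1 //.
  by apply: (scalerI w0); rewrite wAE kE.
- right; apply: (mulmx_frame_ext w0).
  + by rewrite Au reflection_fix // dotpC dotp_crossl.
  + by rewrite Av reflection_fix // dotpC dotp_crossr.
  + by apply: (scalerI w0); rewrite wAE kE reflection_normal // scaleNr scalerN.
Qed.

Lemma orthogonal_fix2_det_gt0 (A : 'M[R]_3) (u v : V) : A *m A^T = 1%:M ->
  0 < \det A -> dotp (cross u v) (cross u v) != 0 -> u *m A = u -> v *m A = v ->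
  A = 1%:M.
Proof.
move=> oA detA w0 Au Av; case: (orthogonal_fix2 oA w0 Au Av) => // AE.
by exfalso; move: detA; rewrite AE det_reflection -?dotpp_neq0 //; lra.
Qed.

Lemma coord_sqr_le_sqdist (x y : V) i : (x 0 i - y 0 i) ^+ 2 <= sqdist x y.
Proof.
rewrite /sqdist dotpE !mxE -!expr2.
have := sqr_ge0 (x 0 i0 - y 0 i0); have := sqr_ge0 (x 0 i1 - y 0 i1).
have := sqr_ge0 (x 0 i2 - y 0 i2).
by move: i; apply: ord3_ind; lra.
Qed.

End Euclidean.

(** * Calculus of space curves *)

Section Derivatives.
Variable R : realType.
Local Notation V := 'rV[R]_3.

Lemma derive1_coord (f : R -> V) (x : R) i : derivable f x 1 ->
  derivable (fun t => f t 0 i) x 1 /\ derive1 f x 0 i = 'D_1 (fun t => f t 0 i) x.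
Proof.
move=> df; split; first exact: (derivable_mxP f x 1).1 df 0 i.
by rewrite derive1E derive_mx // mxE.
Qed.

Lemma derive1_affine_fixed (f : R -> V) (A : 'M[R]_3) (b : V) (x : R) :
  derivable f x 1 -> (\forall t \near x, f t *m A + b = f t) ->
  derive1 f x *m A = derive1 f x.
Proof.
move=> df near_fix; pose F i t := f t 0 i.
have dF i : derivable (F i) x 1 by have [] := derive1_coord i df.
have DF i : derive1 f x 0 i = 'D_1 (F i) x by have [] := derive1_coord i df.
apply/rowP => j; rewrite mulmx3E !DF.
have -> : 'D_1 (F j) x =
    'D_1 (A i0 j *: F i0 + A i1 j *: F i1 + A i2 j *: F i2 + cst (b 0 j)) x.
  apply: near_eq_derive; apply: filterS near_fix => t fix_t; rewrite /F /=.
  have := congr1 (fun v : V => v 0 j) fix_t; rewrite /= mxE mulmx3E => <-.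
  by rewrite !fctE /GRing.scale /= -!(mulrC (A _ j)).
rewrite deriveD; last 2 first.
- by apply: derivableD; [apply: derivableD|]; apply: derivableZ.
- exact: derivable_cst.
rewrite derive_cst addr0 !deriveD; last 4 first.
- exact: derivableZ.
- exact: derivableZ.
- by apply: derivableD; apply: derivableZ.
- exact: derivableZ.
by rewrite !deriveZ //= /GRing.scale /= -!(mulrC (A _ j)).
Qed.

Lemma dotp_derive1_unit (g : R -> V) (x : R) : derivable g x 1 ->
  (\forall t \near x, dotp (g t) (g t) = 1) -> dotp (g x) (derive1 g x) = 0.
Proof.
move=> dg near_unit; pose F i t := g t 0 i.
have dF i : derivable (F i) x 1 by have [] := derive1_coord i dg.
have DF i : derive1 g x 0 i = 'D_1 (F i) x by have [] := derive1_coord i dg.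
have : 'D_1 (F i0 * F i0 + F i1 * F i1 + F i2 * F i2) x = 'D_1 (cst (1 : R)) x.
  by apply: near_eq_derive; apply: filterS near_unit => t; rewrite !fctE /F -dotpE.
rewrite derive_cst !deriveD; last 4 first.
- exact: derivableM.
- exact: derivableM.
- by apply: derivableD; apply: derivableM.
- exact: derivableM.
by rewrite !deriveM // dotpE !DF /GRing.scale /F /=; lra.
Qed.

End Derivatives.

Section UnitChord.
Variable R : realType.
Local Notation V := 'rV[R]_3.

Definition unit_chord_at (f : R -> V) (x : R) :=
  forall e : R, 0 < e -> exists2 d : R, 0 < d & forall h : R, `|h| < d ->
    `|sqdist (f (x + h)) (f x) - h ^+ 2| <= e * h ^+ 2.

Lemma dotpp_continuous : continuous (fun v : V => dotp v v).
Proof.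
move=> v; have coord i : {for v, continuous (fun w : V => w 0 i)}.
  exact: coord_continuous.
have -> : (fun w : V => dotp w w) =
    (fun w : V => w 0 i0 * w 0 i0 + w 0 i1 * w 0 i1 + w 0 i2 * w 0 i2).
  by apply: funext => w; rewrite dotpE.
exact: continuousD (continuousD (continuousM (coord i0) (coord i0))
  (continuousM (coord i1) (coord i1))) (continuousM (coord i2) (coord i2)).
Qed.

Lemma unit_speed_unit_chord (f : R -> V) (s : R) :
  derivable f s 1 -> dotp (derive1 f s) (derive1 f s) = 1 -> unit_chord_at f s.
Proof.
move=> df f'1 e e0.
have diff_quot : (fun h : R => h^-1 *: (f (h *: 1 + s) - f s)) @ 0^' --> derive1 f s.
  by rewrite derive1E; exact: df.
have := cvg_comp _ _ diff_quot (@dotpp_continuous (derive1 f s)).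
move/cvgrPdist_le => /(_ e e0) /nbhs_ballP [d d0 near_s]; exists d => // h hd.
have [->|h0] := eqVneq h 0.
  by rewrite addr0 sqdistxx expr0n /= subr0 mulr0 normr0.
have := near_s h; rewrite /ball /= sub0r normrN f'1 => /(_ hd h0).
have hA : (h%:A : R) = h by rewrite /GRing.scale /= mulr1.
rewrite /= dotpZl dotpZr hA (addrC h s) -/(sqdist _ _) => quot_close.
have h2_gt0 : 0 < h ^+ 2 by rewrite exprn_even_gt0.
have -> : sqdist (f (s + h)) (f s) - h ^+ 2 =
    - (h ^+ 2 * (1 - h^-1 * (h^-1 * sqdist (f (s + h)) (f s)))).
  by field.
by rewrite normrN normrM (ger0_norm (sqr_ge0 h)) mulrC ler_pM2r.
Qed.

Lemma ball_rV3 (x y : V) r : 0 < r -> (forall i, `|x 0 i - y 0 i| < r) -> ball x r y.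
Proof. by move=> r0 xy; split => // i j; rewrite (ord1 i); exact: xy. Qed.

End UnitChord.

Section Reparametrization.
Variable R : realType.
Local Notation V := 'rV[R]_3.

Lemma within_itv_continuous_eps (f : R -> R) (a b : R) :
  (forall s, a <= s <= b -> forall e, 0 < e -> exists2 d, 0 < d &
     forall t, a <= t <= b -> `|t - s| < d -> `|f t - f s| < e) ->
  {within `[a, b], continuous f}.
Proof.
move=> f_cont; apply/subspace_continuousP => x /=; rewrite in_itv /= => Ix.
apply/cvgrPdist_lt => e e0; have [d d0 near_x] := f_cont x Ix e e0.
rewrite near_withinE; apply/nbhs_ballP; exists d => // t /= xt.
by rewrite in_itv /= distrC => It; apply: near_x => //; rewrite distrC.
Qed.

Lemma is_derive1_eps (f : R -> R) (x L : R) :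
  (forall e, 0 < e -> exists2 d, 0 < d &
     forall h, 0 < `|h| < d -> `|(f (x + h) - f x) / h - L| < e) ->
  is_derive x 1 f L.
Proof.
move=> f'L.
have quot_cvg : (fun h : R => h^-1 *: (f (h *: 1 + x) - f x)) @ 0^' --> L.
  apply/cvgrPdist_lt => e e0; have [d d0 near_x] := f'L e e0.
  apply/nbhs_ballP; exists d => // h /= hd h0.
  rewrite distrC /GRing.scale /= mulr1 (addrC h) mulrC; apply: near_x.
  by rewrite normr_gt0 h0 /=; move: hd; rewrite /ball /= sub0r normrN.
apply: DeriveDef; first exact: (cvgP _ quot_cvg).
by rewrite /derive; apply: cvg_lim.
Qed.

Lemma sqr_ratio_close (sq h k eps : R) : 0 < eps -> eps <= 1 / 2 -> h != 0 ->
  0 < k / h -> `|sq - h ^+ 2| <= eps * h ^+ 2 -> `|sq - k ^+ 2| <= eps * k ^+ 2 ->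
  `|k / h - 1| <= 4 * eps.
Proof.
move=> e0 e1 h0 r0 /ler_normlP [A1 A2] /ler_normlP [B1 B2].
set r := k / h; have kE : k = r * h by rewrite /r divfK.
have h2_gt0 : 0 < h ^+ 2 by rewrite exprn_even_gt0.
rewrite kE exprMn in B1 B2.
have C1 : r ^+ 2 * (1 - eps) <= 1 + eps by rewrite -(ler_pM2r h2_gt0); nra.
have C2 : 1 - eps <= r ^+ 2 * (1 + eps) by rewrite -(ler_pM2r h2_gt0); nra.
have D1 : r ^+ 2 <= 1 + 4 * eps.
  have p0 : 0 < 1 - eps by lra.
  by rewrite -(ler_pM2r p0); apply: (le_trans C1); nra.
have D2 : 1 - 2 * eps <= r ^+ 2.
  have p0 : 0 < 1 + eps by lra.
  by rewrite -(ler_pM2r p0); apply: le_trans C2; nra.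
rewrite ler_norml; apply/andP; split; last by nra.
have [r1|r1] := lerP r 1; last by lra.
have : r ^+ 2 <= r by rewrite expr2 ger_pMr.
lra.
Qed.

Variables (c1 c2 : R -> V) (psi : R -> R) (a b : R).
Hypothesis ab : a < b.
Hypothesis c1_chord : forall x, a < x < b -> unit_chord_at c1 x.
Hypothesis c2_chord : forall x, a < x < b -> unit_chord_at c2 x.
Hypothesis psi_into : forall s, a <= s <= b -> a <= psi s <= b.
Hypothesis psi_onto : forall u, a <= u <= b -> exists2 s, a <= s <= b & psi s = u.
Hypothesis psi_incr : {in `[a, b] &, {homo psi : s t / s < t}}.
Hypothesis psi_cont : forall s, a <= s <= b -> forall e, 0 < e -> exists2 d, 0 < d &
  forall t, a <= t <= b -> `|t - s| < d -> `|psi t - psi s| < e.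
Hypothesis psi_chord : forall s t, a <= s <= b -> a <= t <= b ->
  sqdist (c2 (psi s)) (c2 (psi t)) = sqdist (c1 s) (c1 t).

Let psi_lt s t : a <= s <= b -> a <= t <= b -> s < t -> psi s < psi t.
Proof. by move=> Is It; apply: psi_incr; rewrite in_itv. Qed.

Let psi_le s t : a <= s <= b -> a <= t <= b -> s <= t -> psi s <= psi t.
Proof.
by move=> Is It; rewrite le_eqVlt => /orP[/eqP->//|st]; apply/ltW/psi_lt.
Qed.

Lemma reparam_endpoints : psi a = a /\ psi b = b.
Proof.
have Ia : a <= a <= b by rewrite lexx ltW.
have Ib : a <= b <= b by rewrite lexx ltW.
have [sa /[dup] Isa /andP[a_le_sa _] psa] := psi_onto Ia.
have [sb /[dup] Isb /andP[_ sb_le_b] psb] := psi_onto Ib.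
have := psi_le Ia Isa a_le_sa; have := psi_le Isb Ib sb_le_b.
have := psi_into Ia; have := psi_into Ib; rewrite psa psb.
by move=> /andP[? ?] /andP[? ?] ? ?; split; lra.
Qed.

Lemma reparam_derive x : a < x < b -> is_derive x 1 psi 1.
Proof.
move=> axb; have /andP[ax xb] := axb; set y := psi x.
have [pa pb] := reparam_endpoints.
have Ix : a <= x <= b by rewrite !ltW.
have Ia : a <= a <= b by rewrite lexx ltW.
have Ib : a <= b <= b by rewrite lexx ltW.
have Iy : a < y < b.
  by apply/andP; split; [rewrite -[X in X < _]pa | rewrite -[X in _ < X]pb];
    apply: psi_lt.
apply: is_derive1_eps => e e0.
set eps := Num.min (1 / 2) (e / 8).
have eps_gt0 : 0 < eps by rewrite lt_min; apply/andP; split; lra.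
have eps_le_half : eps <= 1 / 2 by rewrite ge_min lexx.
have eps_le_e8 : eps <= e / 8 by rewrite ge_min lexx orbT.
have [d1 d1_gt0 c1_near] := c1_chord axb eps_gt0.
have [d2 d2_gt0 c2_near] := c2_chord Iy eps_gt0.
have [d3 d3_gt0 psi_near] := psi_cont Ix d2_gt0.
exists (Num.min d1 (Num.min d3 (Num.min (x - a) (b - x)))).
  by rewrite !lt_min d1_gt0 d3_gt0 !subr_gt0 ax xb.
move=> h /andP [absh_gt0]; rewrite !lt_min => /and4P [hd1 hd3 hda hdb].
have Ixh : a <= x + h <= b.
  by move: hda hdb => /ltr_normlP [? ?] /ltr_normlP [? ?]; apply/andP; split; lra.
set k := psi (x + h) - y.
have hk : `|k| < d2 by apply: psi_near => //; rewrite addrC addKr.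
have chord_eq : sqdist (c2 (y + k)) (c2 y) = sqdist (c1 (x + h)) (c1 x).
  by rewrite /k addrC subrK /y psi_chord.
have h_neq0 : h != 0 by rewrite -normr_gt0.
have kh_gt0 : 0 < k / h.
  have [h_pos|h_le0] := ltrP 0 h.
    by apply: divr_gt0 => //; rewrite subr_gt0; apply: psi_lt => //; lra.
  have h_lt0 : h < 0 by rewrite lt_neqAle h_neq0 h_le0.
  have k_lt0 : k < 0 by rewrite subr_lt0; apply: psi_lt => //; lra.
  by rewrite -mulrNN -invrN divr_gt0 // oppr_gt0.
(* [h ^+ 2] and [k ^+ 2] both approximate the same squared chord *)
have := sqr_ratio_close eps_gt0 eps_le_half h_neq0 kh_gt0 (c1_near h hd1).
by rewrite -chord_eq => /(_ (c2_near k hk)); rewrite /k /y; lra.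
Qed.

Lemma reparam_id t : a <= t <= b -> psi t = t.
Proof.
move=> /andP[a_le_t t_le_b]; have [pa _] := reparam_endpoints.
have [->//|t_neq_a] := eqVneq t a.
have a_lt_t : a < t by rewrite lt_neqAle eq_sym t_neq_a a_le_t.
have psi'1 z : z \in `]a, t[ -> is_derive z 1 psi ((fun=> 1) z).
  by rewrite in_itv /= => /andP[az zt]; apply: reparam_derive; apply/andP; split; lra.
have psi_wcont : {within `[a, t], continuous psi}.
  apply: within_itv_continuous_eps => s /andP[a_le_s s_le_t] e e0.
  have Is : a <= s <= b by apply/andP; split; lra.
  have [d d_gt0 near_s] := psi_cont Is e0; exists d => // u /andP[a_le_u u_le_t].
  by apply: near_s; apply/andP; split; lra.
by have [z _] := MVT a_lt_t psi'1 psi_wcont; rewrite mul1r pa; lra.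
Qed.

End Reparametrization.

(** * Symmetries of an embedded unit-speed arc *)

Section Curve.
Variable R : realType.
Local Notation V := 'rV[R]_3.
Variables (l : R) (c : R -> V).
Hypothesis l_gt0 : 0 < l.
Hypothesis c_emb : embedded_on c (- (l / 2)) (l / 2).
Hypothesis c_usc : unit_speed_nonzero_curvature c (- (l / 2)) (l / 2).
Local Notation a := (- (l / 2)).
Local Notation b := (l / 2).
Local Notation C := [set c s | s in [set s | a <= s <= b]].

Lemma curve_unit_chord s : a <= s <= b -> unit_chord_at c s.
Proof. by move=> Is; have [c'_s c'_unit _ _] := c_usc Is; apply: unit_speed_unit_chord. Qed.

Lemma curve_continuous s : a <= s <= b -> {for s, continuous c}.
Proof.
by move=> Is; have [c'_s _ _ _] := c_usc Is; apply/differentiable_continuous/derivable1_diffP.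
Qed.

Lemma curve_chord_small s : a <= s <= b -> forall e, 0 < e -> exists2 d, 0 < d &
  forall t, `|t - s| < d -> sqdist (c t) (c s) < e.
Proof.
move=> Is e e0; have [d1 d1_gt0 near_s] := curve_unit_chord Is ltr01.
exists (Num.min d1 (Num.min 1 (e / 2))); first by rewrite !lt_min d1_gt0 ltr01 divr_gt0.
move=> t; rewrite !lt_min => /and3P [td1 t1 te].
have := near_s (t - s) td1; rewrite (addrC s) subrK mul1r => /ler_normlP [_ chord_le].
have := normr_ge0 (t - s); rewrite -real_normK ?num_real // in chord_le.
nra.
Qed.

Lemma curve_chord_separated s : a <= s <= b -> forall e, 0 < e -> exists2 d, 0 < d &
  forall t, a <= t <= b -> sqdist (c t) (c s) < d -> `|t - s| < e.
Proof.
move=> Is e e0.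
pose K : set R := `[a, s - e]%classic `|` `[s + e, b]%classic.
have KI t : K t -> a <= t <= b.
  move: Is => /andP[a_le_s s_le_b].
  by case=> /=; rewrite in_itv /= => /andP [? ?]; apply/andP; split; lra.
have cK_compact : compact (c @` K).
  apply: continuous_compact; last by apply: compactU; exact: segment_compact.
  apply: continuous_in_subspaceT => t; rewrite inE => Kt.
  exact: curve_continuous (KI _ Kt).
have cK_closed : closed (c @` K).
  by apply: compact_closed => //; exact: norm_hausdorff.
have s_notin_K : (~` (c @` K)) (c s).
  move=> [t Kt cts]; move: (Kt); rewrite (c_emb (KI _ Kt) Is cts) /K /=.
  by rewrite !in_itv /= => -[] /andP [? ?]; lra.
have : nbhs (c s) (~` (c @` K)).
  by apply: open_nbhs_nbhs; split => //; exact: closed_openC.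
move=> /nbhs_ballP [r r_gt0 ball_notin_K].
exists (r ^+ 2); first by rewrite exprn_gt0.
move=> t It chord_lt; rewrite real_ltNge ?num_real //; apply/negP => far.
have : (~` (c @` K)) (c t).
  apply: ball_notin_K; apply: ball_rV3 => // i.
  have coord_lt : `|c t 0 i - c s 0 i| ^+ 2 < r ^+ 2.
    rewrite real_normK ?num_real //.
    exact: le_lt_trans (coord_sqr_le_sqdist (c t) (c s) i) chord_lt.
  by rewrite distrC -(@ltr_pXn2r _ 2) // !nnegrE ?normr_ge0 ?(ltW r_gt0).
apply; exists t => //; move: It far; rewrite /K /= !in_itv /= => /andP[a_le_t t_le_b].
have [t_le_s|s_lt_t] := lerP t s => far.
  by left; apply/andP; split => //; lra.
by right; apply/andP; split => //; lra.
Qed.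

Lemma isometry_reparam (T : V -> V) : Defs.isometry T -> T @` C = C ->
  exists phi : R -> R,
  [/\ forall s, a <= s <= b -> a <= phi s <= b /\ c (phi s) = T (c s),
      forall u, a <= u <= b -> exists2 s, a <= s <= b & phi s = u,
      {in `[a, b] &, injective phi} &
      forall s, a <= s <= b -> forall e, 0 < e -> exists2 d, 0 < d &
        forall t, a <= t <= b -> `|t - s| < d -> `|phi t - phi s| < e].
Proof.
move=> isoT TC.
have [phi phiP] : {phi : R -> R &
    forall s, a <= s <= b -> a <= phi s <= b /\ c (phi s) = T (c s)}.
  apply: (@choice R R (fun s t => a <= s <= b -> a <= t <= b /\ c t = T (c s))) => s.
  have [Is|not_Is] := pselect (a <= s <= b); last by exists 0.
  have [t It ct] : C (T (c s)) by rewrite -TC; exists (c s) => //; exists s.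
  by exists t.
have phi_chord s t : a <= s <= b -> a <= t <= b ->
    sqdist (c (phi s)) (c (phi t)) = sqdist (c s) (c t).
  by move=> Is It; rewrite (phiP s Is).2 (phiP t It).2 isoT.
exists phi; split => //.
- move=> u Iu; have [_ [s Is <-] Tcs] : (T @` C) (c u) by rewrite TC; exists u.
  exists s => //; apply: c_emb => //; first exact: (phiP s Is).1.
  by rewrite (phiP s Is).2.
- move=> s t; rewrite !in_itv /= => Is It phi_st; apply: c_emb => //.
  by apply: sqdist_eq0; rewrite -phi_chord // phi_st sqdistxx.
- move=> s Is e e0.
  have [d1 d1_gt0 sep] := curve_chord_separated (phiP s Is).1 e0.
  have [d2 d2_gt0 small] := curve_chord_small Is d1_gt0.
  exists d2 => // t It ts; apply: sep; first exact: (phiP t It).1.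
  by rewrite phi_chord //; apply: small.
Qed.

Lemma symmetry_fix_or_reverse (T : V -> V) : Defs.isometry T -> T @` C = C ->
  (forall s, a <= s <= b -> T (c s) = c s) \/
  (forall s, a <= s <= b -> T (c s) = c (- s)).
Proof.
move=> isoT TC; have [phi [phiP phi_onto phi_inj phi_cont]] := isometry_reparam isoT TC.
have phi_into s : a <= s <= b -> a <= phi s <= b by move=> /phiP[].
have phi_chord s t : a <= s <= b -> a <= t <= b ->
    sqdist (c (phi s)) (c (phi t)) = sqdist (c s) (c t).
  by move=> Is It; rewrite (phiP s Is).2 (phiP t It).2 isoT.
have b_gt0 : 0 < b by rewrite divr_gt0.
have ab : a < b by lra.
have c_chord x : a < x < b -> unit_chord_at c x.
  by move=> /andP[? ?]; apply: curve_unit_chord; rewrite !ltW.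
have phi_wcont := within_itv_continuous_eps phi_cont.
case: (itv_continuous_inj_mono phi_wcont phi_inj) => phi_mono;
  [left|right] => s Is; rewrite -(phiP s Is).2; congr c.
  exact: (reparam_id ab c_chord c_chord phi_into phi_onto phi_mono phi_cont phi_chord).
suff : - phi s = s by move/(canRL opprK).
apply: (@reparam_id _ c (fun u => c (- u)) (fun s => - phi s) a b ab c_chord) => //.
- move=> x /andP[ax xb] e e0.
  have [|d d_gt0 near_x] := curve_unit_chord _ e0 (s := - x).
    by apply/andP; split; lra.
  by exists d => // h hd; rewrite opprD; have := near_x (- h); rewrite normrN sqrrN; apply.
- by move=> t /phi_into /andP[? ?]; apply/andP; split; lra.
- move=> u /andP[? ?]; have [|t It phi_t] := phi_onto (- u); first by apply/andP; split; lra.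
  by exists t => //; rewrite phi_t opprK.
- by move=> t u It Iu tu; rewrite ltrN2; apply: phi_mono.
- move=> t It e e0; have [d d_gt0 near_t] := phi_cont t It e e0.
  by exists d => // u Iu tu; rewrite -opprD normrN; apply: near_t.
- by move=> t u It Iu; rewrite !opprK; apply: phi_chord.
Qed.

Let in_itvoo s : s \in `]a, b[ -> a <= s <= b.
Proof. by rewrite in_itv /= => /andP[? ?]; rewrite !ltW. Qed.

Let zero_in_itvoo : 0 \in `]a, b[.
Proof. by rewrite in_itv /= oppr_lt0 andbb divr_gt0. Qed.

Lemma curve_affine_fixed_frame (A : 'M[R]_3) (d : V) :
  (forall s, a <= s <= b -> c s *m A + d = c s) ->
  derive1 c 0 *m A = derive1 c 0 /\
  derive1 (derive1 c) 0 *m A = derive1 (derive1 c) 0.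
Proof.
move=> c_fixed.
have c'_fixed t : t \in `]a, b[ -> derive1 c t *m A = derive1 c t.
  move=> It; have [c'_t _ _ _] := c_usc (in_itvoo It).
  apply: (derive1_affine_fixed (b := d)) => //.
  by apply: filterS (near_in_itvoo It) => s /in_itvoo; apply: c_fixed.
split; first exact: c'_fixed.
have [_ _ c''_0 _] := c_usc (in_itvoo zero_in_itvoo).
apply: (derive1_affine_fixed (b := 0)) => //.
by apply: filterS (near_in_itvoo zero_in_itvoo) => t /c'_fixed; rewrite addr0.
Qed.

Lemma curve_frame_orthogonal : dotp (derive1 c 0) (derive1 (derive1 c) 0) = 0.
Proof.
have [_ _ c''_0 _] := c_usc (in_itvoo zero_in_itvoo).
apply: dotp_derive1_unit => //.
by apply: filterS (near_in_itvoo zero_in_itvoo) => t /in_itvoo /c_usc[].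
Qed.

Lemma curve_frame_cross_neq0 :
  dotp (cross (derive1 c 0) (derive1 (derive1 c) 0))
       (cross (derive1 c 0) (derive1 (derive1 c) 0)) != 0.
Proof.
have [_ c'_unit _ c''_neq0] := c_usc (in_itvoo zero_in_itvoo).
by rewrite dotpp_cross curve_frame_orthogonal c'_unit expr0n /= subr0 mul1r dotpp_neq0.
Qed.

Lemma positive_symmetry_nontrivial (P : V -> V) :
  symmetry_of C P -> orientation_preserving P -> nontrivial_on C P.
Proof.
move=> [isoP P_neq_id _] [A [d [detA PE]]]; apply: contrapT => trivP.
have P_fixed s : a <= s <= b -> c s *m A + d = c s.
  move=> Is; rewrite -PE; apply: contrapT => moved.
  by apply: trivP; exists (c s) => //; exists s.
have [A_c' A_c''] := curve_affine_fixed_frame P_fixed.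
have A1 : A = 1%:M.
  exact: orthogonal_fix2_det_gt0 (isometry_affine_orthogonal isoP PE) detA
    curve_frame_cross_neq0 A_c' A_c''.
have d0 : d = 0.
  by have := P_fixed 0 (in_itvoo zero_in_itvoo); rewrite A1 mulmx1 -[RHS]addr0 => /addrI.
by apply: P_neq_id; apply: funext => x; rewrite PE A1 mulmx1 d0 addr0.
Qed.

End Curve.

Unset Implicit Arguments.

Theorem propositionA2 (R : realType) (l : R) (c : R -> 'rV[R]_3) :
  0 < l ->
  embedded_on c (- (l / 2)) (l / 2) ->
  unit_speed_nonzero_curvature c (- (l / 2)) (l / 2) ->
  let C := [set c s | s in [set s | - (l / 2) <= s <= l / 2]] in
  ((exists T, symmetry_of C T /\ orientation_preserving T) /\
   (exists T, symmetry_of C T /\ orientation_reversing T))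
  <-> (planar C /\ exists T, symmetry_of C T /\ nontrivial_on C T).
Proof.
move=> l_gt0 c_emb c_usc C; split.
- move=> [[P [symP posP]] [N [[isoN _ NC] negN]]].
  have ntP := positive_symmetry_nontrivial l_gt0 c_usc symP posP.
  split; last by exists P.
  case: symP posP negN => isoP _ PC [A [b [detA PE]]] [B [d [detB NE]]].
  have [P_fix|P_rev] := symmetry_fix_or_reverse l_gt0 c_emb c_usc isoP PC.
    by case: ntP => _ [s Is <-] []; apply: P_fix.
  have [N_fix|N_rev] := symmetry_fix_or_reverse l_gt0 c_emb c_usc isoN NC.
  + apply: (@planar_affine_agree _ _ B 1%:M d 0).
      by apply: contraTneq detB => ->; rewrite det1 ltr10.
    by move=> _ [s Is <-]; rewrite -NE N_fix // mulmx1 addr0.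
  + apply: (@planar_affine_agree _ _ A B b d).
      by apply: contraTneq detB => <-; rewrite -leNgt ltW.
    by move=> _ [s Is <-]; rewrite -PE -NE P_rev // N_rev.
- move=> [pl [T [symT ntT]]]; case: (symT) => isoT _ _.
  have [S [isoS revS S_fix]] := planar_reflection pl.
  have symS : symmetry_of C S.
    by split => //; [apply: orientation_reversing_neq_id | apply: eq_image_id].
  have [posT|revT] := isometry_orientation isoT.
    by split; [exists T | exists S].
  split; last by exists T.
  by exists (T \o S); split; [apply: symmetry_comp_fixing | apply: orientation_reversing_comp].
Qed.
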